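(* Let $K$ be a field of characteristic zero and $W_n=\mathrm{Der}_K(K[x_1^{\pm1},\ldots,x_n^{\pm1}])$. If $\sigma$ is a Lie algebra automorphism of $W_n$ with $\sigma(\partial_i)=\partial_i$ for all $i=1,\ldots,n$, then $\sigma$ is the identity.
   Context: $\partial_i=\partial/\partial x_i$. *)

From HB Require Import structures.
From mathcomp Require Import all_boot all_order all_algebra.
From mathcomp Require Import fraction.
From mathcomp.multinomials Require Import mpoly.
Set Implicit Arguments. Unset Strict Implicit. Unset Printing Implicit Defensive.
Import GRing.Theory.
Local Open Scope ring_scope.

Notation "x %:F" := (@FracField.tofrac _ x) (format "x %:F").

Definition Pol (K : fieldType) (n : nat) := {mpoly K[n]}.
Definition Frac (K : fieldType) (n : nat) := {fraction {mpoly K[n]}}.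

(* The Laurent polynomial ring K[x_1^{+-1},...,x_n^{+-1}], realised as the
   subring of K(x_1..x_n) of elements p / x^m with p a polynomial and
   x^m a monomial. *)
Definition laurent (K : fieldType) (n : nat) (f : Frac K n) : Prop :=
  exists (p : {mpoly K[n]}) (m : 'X_{1..n}), f = p%:F / ('X_[m])%:F.

Definition Laurent (K : fieldType) (n : nat) := {f : Frac K n | laurent f}.

Definition sc (K : fieldType) (n : nat) (a : K) : Frac K n := (a%:MP)%:F.

(* K-linear derivations of the Laurent polynomial ring. Since the ring
   operations of Laurent n are those of Frac, linearity and the Leibniz rule
   are stated through the embedding sval. *)
Definition is_der (K : fieldType) (n : nat) (D : Laurent K n -> Laurent K n) : Prop :=
  (forall (a : K) (f g h : Laurent K n),
      sval h = sc n a * sval f + sval g ->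
      sval (D h) = sc n a * sval (D f) + sval (D g)) /\
  (forall f g h : Laurent K n,
      sval h = sval f * sval g ->
      sval (D h) = sval f * sval (D g) + sval (D f) * sval g).

Definition W (K : fieldType) (n : nat) := {D : Laurent K n -> Laurent K n | is_der D}.

Definition is_lin_comb (K : fieldType) (n : nat) (a : K) (D E H : W K n) : Prop :=
  forall f, sval (sval H f) = sc n a * sval (sval D f) + sval (sval E f).

Definition is_bracket (K : fieldType) (n : nat) (D E H : W K n) : Prop :=
  forall f, sval (sval H f) = sval (sval D (sval E f)) - sval (sval E (sval D f)).

Definition is_partial (K : fieldType) (n : nat) (i : 'I_n) (D : W K n) : Prop :=
  forall (f : Laurent K n) (p : {mpoly K[n]}) (m : 'X_{1..n}),
    sval f = p%:F / ('X_[m])%:F ->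
    sval (sval D f) = (mderiv i p)%:F / ('X_[m])%:F
                    - ((m i)%:R * p)%:F / ('X_[m] * 'X_i)%:F.

Definition lie_aut (K : fieldType) (n : nat) (s : W K n -> W K n) : Prop :=
  bijective s /\
  (forall a D E H, is_lin_comb a D E H -> is_lin_comb a (s D) (s E) (s H)) /\
  (forall D E H, is_bracket D E H -> is_bracket (s D) (s E) (s H)).

From HB Require Import structures.
From mathcomp Require Import all_boot all_order all_algebra.
From mathcomp Require Import fraction.
From mathcomp.multinomials Require Import mpoly.
From mathcomp Require Import ring zify.
From Stdlib Require Import ProofIrrelevance ClassicalEpsilon FunctionalExtensionality.
Set Implicit Arguments. Unset Strict Implicit. Unset Printing Implicit Defensive.
Import GRing.Theory.
Local Open Scope ring_scope.

(** Write [E_i = x_i d_i], [F_i = x_i^2 d_i], [G_i = x_i^-1 d_i] and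
   [M_a^j = x^a d_j] for [a] in [Z^n] ([eW], [sqW], [invW], [monW] below).  A derivation is determined by its values
   [D(x_k)], and [sigma] commutes with every [ad d_l]; since the Laurent
   polynomials killed by all [d_l] are the constants, [sigma(E_i) = (x_i + c) d_i].
   The relation [[E_i, G_i] = -2 G_i] then forces [c = 0], for otherwise the
   components of [sigma(G_i)] would solve [(x_i + c) d_i u = -k u] with [k > 0],
   whose only Laurent solution is [0].  In the same way [sigma(F_i) = F_i].  The
   [M_a^j] are joint eigenvectors of the [ad E_i] (eigenvalue [a_i - delta_ij]),
   lowered by [ad d_i] and raised by [ad F_i]; this pins [sigma(M_a^j) = M_a^j]
   by induction on [|a|], and every [D = sum_k D(x_k) d_k] is a K-linear
   combination of the [M_a^j]. *)

Lemma seq_argmax (T : eqType) (s : seq T) (f : T -> nat) : s != [::] ->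
  exists2 x, x \in s & forall y, y \in s -> (f y <= f x)%N.
Proof.
elim: s => [//|a s ih] _.
case: (eqVneq s [::]) => [->|/ih [x xs hx]].
  by exists a; rewrite ?mem_seq1 // => y; rewrite mem_seq1 => /eqP ->.
case: (leqP (f a) (f x)) => h.
  exists x; first by rewrite inE xs orbT.
  by move=> y; rewrite inE => /orP [/eqP ->|/hx].
exists a; first by rewrite inE eqxx.
by move=> y; rewrite inE => /orP [/eqP ->//|/hx hy]; exact: leq_trans hy (ltnW h).
Qed.

Lemma seq_argmin (T : eqType) (s : seq T) (f : T -> nat) : s != [::] ->
  exists2 x, x \in s & forall y, y \in s -> (f x <= f y)%N.
Proof.
elim: s => [//|a s ih] _.
case: (eqVneq s [::]) => [->|/ih [x xs hx]].
  by exists a; rewrite ?mem_seq1 // => y; rewrite mem_seq1 => /eqP ->.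
case: (leqP (f x) (f a)) => h.
  exists x; first by rewrite inE xs orbT.
  by move=> y; rewrite inE => /orP [/eqP ->|/hx].
exists a; first by rewrite inE eqxx.
by move=> y; rewrite inE => /orP [/eqP ->//|/hx hy]; exact: leq_trans (ltnW h) hy.
Qed.

(* Identities in an arbitrary field, instantiated below at [Frac K n], where
   [field] itself is too slow. *)
Section FieldIdentities.
Variable G : fieldType.
Implicit Types a b c d e p q x y : G.

Lemma frac_shift_id e p y x a b : y != 0 -> x != 0 ->
  (e * y + p * (b * y) - (a + b) * (p * y)) / (x * y) = (e - a * p) / x.
Proof. by move=> hy hx; field; apply/andP. Qed.

Lemma frac_lin_id c e1 e2 a p q x : x != 0 ->
  (c * e1 + e2 - a * (c * p + q)) / x = c * ((e1 - a * p) / x) + (e2 - a * q) / x.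
Proof. by move=> hx; field. Qed.

Lemma frac_leibniz_id e1 e2 p q a b x y : x != 0 -> y != 0 ->
  (e1 * q + p * e2 - (a + b) * (p * q)) / (x * y) =
  p / x * ((e2 - b * q) / y) + (e1 - a * p) / x * (q / y).
Proof. by move=> hx hy; field; apply/andP. Qed.

Lemma frac_comb_id c p q x y : x != 0 -> y != 0 ->
  c * (p / x) + q / y = (c * (p * y) + q * x) / (x * y).
Proof. by move=> hx hy; field; apply/andP. Qed.

Lemma frac_euler_id x a b c : x != 0 -> b != 0 ->
  x * (a / b - c / (b * x)) = (x * a - c) / b.
Proof. by move=> hx hb; field; apply/andP. Qed.

Lemma clear_euler_frac_id x s d q y r p : x != 0 -> y != 0 ->
  x * d = q / y -> (x + s) * d = r * (p / y) -> (x + s) * q = r * (p * x).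
Proof.
move=> hx hy h1 h2; have -> : q = x * d * y by rewrite h1 divfK.
have -> : (x + s) * (x * d * y) = (x + s) * d * x * y by ring.
by rewrite h2; field.
Qed.

End FieldIdentities.

Section LaurentRing.
Variables (K : fieldType) (n : nat).
Local Notation F := (Frac K n).
Local Notation L := (Laurent K n).
Local Notation P := {mpoly K[n]}.
Local Notation laurent := (@laurent K n).
Local Notation sc := (@sc K n).

Definition xmon (m : 'X_{1..n}) : F := ('X_[m] : P)%:F.
Definition xvar (i : 'I_n) : F := xmon U_(i)%MM.

Lemma mpolyX_neq0 m : ('X_[m] : P) != 0.
Proof.
apply/eqP => h; have := @mcoeffX n K m m; rewrite h mcoeff0 eqxx => /eqP.
by rewrite eq_sym oner_eq0.
Qed.

Lemma xmon_neq0 m : xmon m != 0.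
Proof. by rewrite tofrac_eq0 mpolyX_neq0. Qed.

Lemma xvar_neq0 i : xvar i != 0.
Proof. exact: xmon_neq0. Qed.

Lemma xmonD m1 m2 : xmon (m1 + m2) = xmon m1 * xmon m2.
Proof. by rewrite /xmon mpolyXD rmorphM. Qed.

Lemma xmon0 : xmon 0 = 1.
Proof. by rewrite /xmon mpolyX0 rmorph1. Qed.

Lemma laurent_tofrac (p : P) : laurent p%:F.
Proof. by exists p, 0%MM; rewrite mpolyX0 rmorph1 divr1. Qed.

Lemma laurent0 : laurent 0.
Proof. by rewrite -tofrac0; apply: laurent_tofrac. Qed.

Lemma laurent1 : laurent 1.
Proof. by rewrite -tofrac1; apply: laurent_tofrac. Qed.

Lemma laurent_xmon m : laurent (xmon m).
Proof. exact: laurent_tofrac. Qed.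

Lemma laurent_xvar i : laurent (xvar i).
Proof. exact: laurent_xmon. Qed.

Lemma laurent_sc a : laurent (sc a).
Proof. exact: laurent_tofrac. Qed.

Lemma laurent_nat k : laurent k%:R.
Proof. by rewrite -(rmorph_nat (@FracField.tofrac _)); apply: laurent_tofrac. Qed.

Lemma laurentD u v : laurent u -> laurent v -> laurent (u + v).
Proof.
case=> p [m ->] [q [k ->]]; exists (p * 'X_[k] + q * 'X_[m]), (m + k)%MM.
by rewrite mpolyXD !rmorphD !rmorphM /= addf_div // xmon_neq0.
Qed.

Lemma laurentM u v : laurent u -> laurent v -> laurent (u * v).
Proof.
by case=> p [m ->] [q [k ->]]; exists (p * q), (m + k)%MM; rewrite mpolyXD !rmorphM mulf_div.
Qed.

Lemma laurentN u : laurent u -> laurent (- u).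
Proof. by case=> p [m ->]; exists (- p), m; rewrite rmorphN mulNr. Qed.

Lemma laurentB u v : laurent u -> laurent v -> laurent (u - v).
Proof. by move=> hu hv; apply/laurentD/laurentN. Qed.

Lemma laurent_div_xmon u m : laurent u -> laurent (u / xmon m).
Proof.
by case=> p [k ->]; exists p, (k + m)%MM; rewrite mpolyXD rmorphM invfM mulrA.
Qed.

Lemma sc1 : sc 1 = 1.
Proof. by rewrite /sc mpolyC1 tofrac1. Qed.

Lemma scN a : sc (- a) = - sc a.
Proof. by rewrite /sc mpolyCN tofracN. Qed.

Lemma sc_int z : sc z%:~R = z%:~R.
Proof. by rewrite /sc (rmorph_int (mpolyC n (R:=K))) (rmorph_int (@FracField.tofrac _)). Qed.

Lemma sc_nat k : sc k%:R = k%:R.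
Proof. exact: sc_int k. Qed.

Lemma scN1 : sc (-1) = -1.
Proof. by rewrite scN sc1. Qed.

Definition mkL (u : F) (h : laurent u) : L := exist _ u h.

Lemma mkLE u (h : laurent u) : sval (mkL h) = u.
Proof. by []. Qed.

Lemma L_eq (f g : L) : sval f = sval g -> f = g.
Proof. by case: f g => [u hu] [v hv] /= e; apply: ProofIrrelevanceTheory.subset_eq_compat. Qed.

(* [derF D] extends [D] by the junk value [0] outside the Laurent elements, so
   that it can be applied to terms of [F]. *)
Definition derF (D : L -> L) (u : F) : F :=
  match excluded_middle_informative (laurent u) with
  | left h => sval (D (mkL h)) | right _ => 0 end.

Lemma derF_mkL D u (h : laurent u) : derF D u = sval (D (mkL h)).
Proof.
rewrite /derF; case: excluded_middle_informative => [h'|[]] //.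
by congr (sval (D _)); apply: L_eq.
Qed.

Lemma derFE D (f : L) : derF D (sval f) = sval (D f).
Proof. by case: f => u h; rewrite derF_mkL. Qed.

Lemma laurent_derF D u : laurent (derF D u).
Proof. by rewrite /derF; case: excluded_middle_informative => [h|_]; [exact: svalP | exact: laurent0]. Qed.

Section Derivation.
Variable D : L -> L.
Hypothesis hD : is_der D.

Lemma derL a u v : laurent u -> laurent v ->
  derF D (sc a * u + v) = sc a * derF D u + derF D v.
Proof.
move=> hu hv; have hw := laurentD (laurentM (laurent_sc a) hu) hv.
rewrite (derF_mkL D hw) (derF_mkL D hu) (derF_mkL D hv).
exact: (hD.1 a (mkL hu) (mkL hv) (mkL hw) erefl).
Qed.

Lemma derM u v : laurent u -> laurent v -> derF D (u * v) = u * derF D v + derF D u * v.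
Proof.
move=> hu hv; have hw := laurentM hu hv.
rewrite (derF_mkL D hw) (derF_mkL D hu) (derF_mkL D hv).
exact: (hD.2 (mkL hu) (mkL hv) (mkL hw) erefl).
Qed.

Lemma der0 : derF D 0 = 0.
Proof.
have := derL 1 laurent0 laurent0; rewrite mulr0 addr0 sc1 mul1r => h.
by apply: (@addrI _ (derF D 0)); rewrite addr0 -h.
Qed.

Lemma derD u v : laurent u -> laurent v -> derF D (u + v) = derF D u + derF D v.
Proof. by move=> hu hv; have := derL 1 hu hv; rewrite sc1 !mul1r. Qed.

Lemma derZ a u : laurent u -> derF D (sc a * u) = sc a * derF D u.
Proof. by move=> hu; have := derL a hu laurent0; rewrite !addr0 der0 addr0. Qed.

Lemma derN u : laurent u -> derF D (- u) = - derF D u.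
Proof. by move=> hu; have := derZ (-1) hu; rewrite scN1 !mulN1r. Qed.

Lemma derB u v : laurent u -> laurent v -> derF D (u - v) = derF D u - derF D v.
Proof. by move=> hu hv; rewrite derD ?derN //; apply: laurentN. Qed.

Lemma derZint z u : laurent u -> derF D (z%:~R * u) = z%:~R * derF D u.
Proof. by move=> hu; rewrite -sc_int derZ. Qed.

Lemma derZnat k u : laurent u -> derF D (k%:R * u) = k%:R * derF D u.
Proof. by move=> hu; rewrite -sc_nat derZ. Qed.

Lemma derMr_nat u k : laurent u -> derF D (u * k%:R) = derF D u * k%:R.
Proof. by move=> hu; rewrite mulrC derZnat // mulrC. Qed.

Lemma der1 : derF D 1 = 0.
Proof.
have := derM laurent1 laurent1; rewrite !mulr1 !mul1r => h.
by apply: (@addrI _ (derF D 1)); rewrite addr0 -h.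
Qed.

Lemma der_sc a : derF D (sc a) = 0.
Proof. by have := derZ a laurent1; rewrite mulr1 der1 mulr0. Qed.

Lemma der_nat k : derF D k%:R = 0.
Proof. by rewrite -sc_nat der_sc. Qed.

End Derivation.

Section DerivationsAgreeOnVariables.
Variables D E : L -> L.
Hypotheses (hD : is_der D) (hE : is_der E).
Hypothesis DE_xvar : forall i, derF D (xvar i) = derF E (xvar i).

Let agree u := laurent u /\ derF D u = derF E u.

Let agreeM u v : agree u -> agree v -> agree (u * v).
Proof.
case=> hu eu [hv ev]; split; first exact: laurentM.
by rewrite (derM hD) // (derM hE) // eu ev.
Qed.

Let agree1 : agree 1.
Proof. by split; [exact: laurent1 | rewrite (der1 hD) (der1 hE)]. Qed.

Let agree_xmon m : agree (xmon m).
Proof.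
rewrite /xmon mpolyXE_id rmorph_prod.
apply: (big_ind agree); [exact: agree1 | exact: agreeM | move=> i _].
rewrite rmorphXn; elim: (m i) => [|k ih]; first by rewrite expr0.
by rewrite exprS; apply: agreeM => //; split; [exact: laurent_xvar | exact: DE_xvar].
Qed.

Let agree_tofrac (p : P) : agree p%:F.
Proof.
elim/mpolyind: p => [|c m p _ _ [hp ep]].
  by rewrite tofrac0; split; [exact: laurent0 | rewrite (der0 hD) (der0 hE)].
have -> : (c *: 'X_[m] + p)%:F = sc c * xmon m + p%:F by rewrite -mul_mpolyC rmorphD rmorphM.
have [hm em] := agree_xmon m.
split; first exact: laurentD (laurentM (laurent_sc c) hm) hp.
by rewrite (derL hD) // (derL hE) // em ep.
Qed.

(* Leibniz on [x^m * (p / x^m) = p] determines the value on [p / x^m]. *)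
Lemma der_eq_on_xvar u : laurent u -> derF D u = derF E u.
Proof.
case=> p [m ->]; have hu := laurent_div_xmon m (laurent_tofrac p).
have eu : xmon m * (p%:F / xmon m) = p%:F by rewrite mulrC divfK // xmon_neq0.
have h1 := derM hD (laurent_xmon m) hu; have h2 := derM hE (laurent_xmon m) hu.
rewrite eu (proj2 (agree_tofrac p)) (proj2 (agree_xmon m)) in h1.
rewrite eu h1 in h2; move/addIr: h2; apply: mulfI; exact: xmon_neq0.
Qed.

End DerivationsAgreeOnVariables.


Lemma W_eq (D E : W K n) : (forall f : L, sval (sval D f) = sval (sval E f)) -> D = E.
Proof.
case: D E => [d hd] [e he] /= h.
have de : d = e by apply: functional_extensionality => f; apply: L_eq.
by subst e; apply: ProofIrrelevanceTheory.subset_eq_compat.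
Qed.

Local Notation ap D := (derF (sval D)).

Lemma W_eqF (D E : W K n) : (forall u, laurent u -> ap D u = ap E u) -> D = E.
Proof. by move=> h; apply: W_eq => f; rewrite -!derFE; apply/h/svalP. Qed.

(** * Partial derivatives *)

Definition euler (i : 'I_n) (p : P) : P := 'X_i * mderiv i p.

Lemma eulerM i p q : euler i (p * q) = euler i p * q + p * euler i q.
Proof. by rewrite /euler mderivM; ring. Qed.

Lemma eulerD i p q : euler i (p + q) = euler i p + euler i q.
Proof. by rewrite /euler mderivD mulrDr. Qed.

Lemma eulerCM i c p : euler i (c%:MP * p) = c%:MP * euler i p.
Proof. by rewrite /euler mderiv_mulC mulrCA. Qed.

Lemma eulerX i m : euler i 'X_[m] = (m i)%:R * 'X_[m].
Proof.
rewrite /euler mderivX -mul_mpolyC mpolyC_nat.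
case: (posnP (m i)) => [->|hm]; first by rewrite !mul0r mulr0.
rewrite mulrCA -mpolyXD; congr (_ * 'X_[_]).
rewrite addmC submK //; apply/mnm_lepP => j; rewrite mnm1E.
by case: eqP => [<-|].
Qed.

Lemma mcoeff_euler i (p : P) e : (euler i p)@_e = (e i)%:R * p@_e.
Proof.
elim/mpolyind: p => [|c m p _ _ ih]; first by rewrite /euler mderiv0 mulr0 !mcoeff0 mulr0.
rewrite -mul_mpolyC eulerD eulerCM eulerX !mcoeffD !mcoeffCM ih -mpolyC_nat mcoeffCM !mcoeffX.
by case: eqP => [->|_] /=; ring.
Qed.

(* [euler_frac i p m] is [x_i d_i (p / x^m)]. *)
Definition euler_frac i (p : P) (m : 'X_{1..n}) : F :=
  (euler i p - (m i)%:R * p)%:F / xmon m.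

Lemma euler_frac_shift i p m k : euler_frac i (p * 'X_[k]) (m + k) = euler_frac i p m.
Proof.
rewrite /euler_frac eulerM eulerX mnmDE natrD xmonD; set e := euler i p.
rewrite !(rmorphB, rmorphD, rmorphM, rmorph_nat) -/(xmon k).
exact/frac_shift_id/xmon_neq0/xmon_neq0.
Qed.

Lemma euler_frac_welldef i p q m k :
  p%:F / xmon m = q%:F / xmon k -> euler_frac i p m = euler_frac i q k.
Proof.
move=> /eqP; rewrite eqr_div ?xmon_neq0 // -!rmorphM tofrac_eq => /eqP h.
by rewrite -(euler_frac_shift i p m k) h addmC euler_frac_shift.
Qed.

Lemma euler_fracZ i c p q m :
  euler_frac i (c%:MP * p + q) m = sc c * euler_frac i p m + euler_frac i q m.
Proof.
rewrite /euler_frac eulerD eulerCM /sc; set e1 := euler i p; set e2 := euler i q.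
by rewrite !(rmorphB, rmorphD, rmorphM) frac_lin_id // xmon_neq0.
Qed.

Lemma euler_fracM i p q m k :
  euler_frac i (p * q) (m + k) =
  p%:F / xmon m * euler_frac i q k + euler_frac i p m * (q%:F / xmon k).
Proof.
rewrite /euler_frac eulerM mnmDE natrD xmonD; set e1 := euler i p; set e2 := euler i q.
by rewrite !(rmorphB, rmorphD, rmorphM) frac_leibniz_id // xmon_neq0.
Qed.

(* The right-hand side of [is_partial]. *)
Definition pderiv_frac i (p : P) (m : 'X_{1..n}) : F :=
  (mderiv i p)%:F / ('X_[m])%:F - ((m i)%:R * p)%:F / ('X_[m] * 'X_i)%:F.

Lemma xvar_pderiv_frac i p m : xvar i * pderiv_frac i p m = euler_frac i p m.
Proof.
rewrite /pderiv_frac /euler_frac /euler [('X_[m] * 'X_i)%:F]rmorphM -/(xmon m) -/(xvar i).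
by rewrite frac_euler_id ?xmon_neq0 ?xvar_neq0 // !(rmorphB, rmorphM).
Qed.

Lemma pderiv_frac_welldef i p q m k :
  p%:F / xmon m = q%:F / xmon k -> pderiv_frac i p m = pderiv_frac i q k.
Proof.
move=> h; apply: (mulfI (xvar_neq0 i)).
by rewrite !xvar_pderiv_frac; apply: euler_frac_welldef.
Qed.

Lemma laurent_pderiv_frac i p m : laurent (pderiv_frac i p m).
Proof.
apply: laurentB; first exact/laurent_div_xmon/laurent_tofrac.
by rewrite -mpolyXD; apply/laurent_div_xmon/laurent_tofrac.
Qed.

Definition laurent_repr (f : L) : P * 'X_{1..n} :=
  let ex := constructive_indefinite_description _ (svalP f) in
  (sval ex, sval (constructive_indefinite_description _ (svalP ex))).

Lemma laurent_reprE (f : L) : sval f = (laurent_repr f).1%:F / xmon (laurent_repr f).2.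
Proof.
rewrite /laurent_repr; case: constructive_indefinite_description => p /= hp.
by case: constructive_indefinite_description.
Qed.

Definition pderivL i (f : L) : L :=
  mkL (laurent_pderiv_frac i (laurent_repr f).1 (laurent_repr f).2).

Lemma pderivLE i (f : L) p m :
  sval f = p%:F / xmon m -> sval (pderivL i f) = pderiv_frac i p m.
Proof. by move=> h; apply: pderiv_frac_welldef; rewrite -laurent_reprE. Qed.

Lemma pderivL_der i : is_der (pderivL i).
Proof.
split.
- move=> a f g h eh.
  case: (svalP f) => p [m ef]; case: (svalP g) => q [k eg].
  have eh' : sval h = (a%:MP * (p * 'X_[k]) + q * 'X_[m])%:F / xmon (m + k).
    rewrite eh ef eg xmonD !(rmorphD, rmorphM) -/(xmon k) -/(xmon m) /sc.
    exact/frac_comb_id/xmon_neq0/xmon_neq0.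
  rewrite (pderivLE i eh') (pderivLE i ef) (pderivLE i eg).
  apply: (mulfI (xvar_neq0 i)); rewrite xvar_pderiv_frac mulrDr [xvar i * (_ * _)]mulrCA !xvar_pderiv_frac.
  by rewrite euler_fracZ euler_frac_shift addmC euler_frac_shift.
- move=> f g h eh.
  case: (svalP f) => p [m ef]; case: (svalP g) => q [k eg].
  have eh' : sval h = (p * q)%:F / xmon (m + k).
    by rewrite eh ef eg xmonD rmorphM mulf_div.
  rewrite (pderivLE i eh') (pderivLE i ef) (pderivLE i eg) ef eg.
  apply: (mulfI (xvar_neq0 i)); rewrite xvar_pderiv_frac.
  by rewrite mulrDr [xvar i * (_ * _)]mulrCA [xvar i * (_ * _)]mulrA !xvar_pderiv_frac euler_fracM.
Qed.

Definition pW i : W K n := exist _ (pderivL i) (pderivL_der i).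

Lemma pW_partial i : is_partial i (pW i).
Proof. by move=> f p m; apply: pderivLE. Qed.

Lemma pW_frac i p m : ap (pW i) (p%:F / xmon m) = pderiv_frac i p m.
Proof. by rewrite (derF_mkL _ (laurent_div_xmon m (laurent_tofrac p))); apply: pderivLE. Qed.

Lemma xvar_pW_frac i p m : xvar i * ap (pW i) (p%:F / xmon m) = euler_frac i p m.
Proof. by rewrite pW_frac xvar_pderiv_frac. Qed.

Lemma pW_xvar i k : ap (pW i) (xvar k) = (i == k)%:R.
Proof.
have := xvar_pW_frac i 'X_[U_(k)%MM] 0.
rewrite xmon0 divr1 /euler_frac eulerX mnm0E mul0r subr0 xmon0 divr1.
rewrite rmorphM rmorph_nat -/(xvar k) mnm1E => h.
apply: (mulfI (xvar_neq0 i)); rewrite h eq_sym.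
by case: eqP => [->|_]; rewrite ?mul1r ?mulr1 ?mul0r ?mulr0.
Qed.


Local Notation WW := (W K n).

Definition coord (D : WW) (k : 'I_n) : F := ap D (xvar k).

Lemma laurent_coord D k : laurent (coord D k).
Proof. exact: laurent_derF. Qed.

Lemma W_coord_eq (D E : WW) : (forall k, coord D k = coord E k) -> D = E.
Proof. by move=> h; apply: W_eqF => u; apply: der_eq_on_xvar => //; apply: svalP. Qed.

Definition zeroF (f : L) : L := mkL laurent0.

Lemma zeroF_der : is_der zeroF.
Proof. by split=> [a f g h _ | f g h _] /=; ring. Qed.

Definition zeroW : WW := exist _ zeroF zeroF_der.

Lemma ap_zeroW u : laurent u -> ap zeroW u = 0.
Proof. by move=> hu; rewrite (derF_mkL _ hu). Qed.

Definition mulF (g : L) (D : L -> L) (f : L) : L := mkL (laurentM (svalP g) (svalP (D f))).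

Lemma mulF_der g D : is_der D -> is_der (mulF g D).
Proof.
move=> [hL hM]; split=> /= [a f f' h e | f f' h e].
- by rewrite (hL a f f' h e); ring.
- by rewrite (hM f f' h e); ring.
Qed.

Definition mulW (g : L) (D : WW) : WW := exist _ (mulF g (sval D)) (mulF_der g (svalP D)).

Lemma ap_mulW g D u : laurent u -> ap (mulW g D) u = sval g * ap D u.
Proof. by move=> hu; rewrite (derF_mkL _ hu) (derF_mkL (sval D) hu). Qed.

Definition linF (a : K) (D E : L -> L) (f : L) : L :=
  mkL (laurentD (laurentM (laurent_sc a) (svalP (D f))) (svalP (E f))).

Lemma linF_der a D E : is_der D -> is_der E -> is_der (linF a D E).
Proof.
move=> [hL hM] [kL kM]; split=> /= [b f f' h e | f f' h e].
- by rewrite (hL b f f' h e) (kL b f f' h e); ring.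
- by rewrite (hM f f' h e) (kM f f' h e); ring.
Qed.

Definition linW a (D E : WW) : WW :=
  exist _ (linF a (sval D) (sval E)) (linF_der a (svalP D) (svalP E)).

Lemma ap_linW a D E u : laurent u -> ap (linW a D E) u = sc a * ap D u + ap E u.
Proof. by move=> hu; rewrite !(derF_mkL _ hu). Qed.

Lemma linW_lin_comb a D E : is_lin_comb a D E (linW a D E).
Proof. by []. Qed.

Definition brF (D E : L -> L) (f : L) : L :=
  mkL (laurentB (laurent_derF D (derF E (sval f))) (laurent_derF E (derF D (sval f)))).

Lemma brF_der D E : is_der D -> is_der E -> is_der (brF D E).
Proof.
move=> hD hE; split=> /= [a f g h -> | f g h ->];
  have hf := svalP f; have hg := svalP g;
  have hEf := laurent_derF E (sval f); have hEg := laurent_derF E (sval g);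
  have hDf := laurent_derF D (sval f); have hDg := laurent_derF D (sval g).
- rewrite (derL hE a hf hg) (derL hD a hf hg) (derL hD a hEf hEg) (derL hE a hDf hDg).
  ring.
- rewrite (derM hE hf hg) (derM hD hf hg).
  rewrite (derD hD (laurentM hf hEg) (laurentM hEf hg)).
  rewrite (derD hE (laurentM hf hDg) (laurentM hDf hg)).
  rewrite (derM hD hf hEg) (derM hD hEf hg) (derM hE hf hDg) (derM hE hDf hg).
  ring.
Qed.

Definition brW (D E : WW) : WW := exist _ (brF (sval D) (sval E)) (brF_der (svalP D) (svalP E)).

Lemma ap_brW D E u : laurent u -> ap (brW D E) u = ap D (ap E u) - ap E (ap D u).
Proof. by move=> hu; rewrite (derF_mkL _ hu). Qed.

Lemma brW_bracket D E : is_bracket D E (brW D E).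
Proof. by move=> f /=; rewrite !derFE. Qed.

Lemma coord_brW D E k : coord (brW D E) k = ap D (coord E k) - ap E (coord D k).
Proof. exact/ap_brW/laurent_xvar. Qed.

Lemma coord_mulW g D k : coord (mulW g D) k = sval g * coord D k.
Proof. exact/ap_mulW/laurent_xvar. Qed.

Lemma coord_linW a D E k : coord (linW a D E) k = sc a * coord D k + coord E k.
Proof. exact/ap_linW/laurent_xvar. Qed.

Lemma coord_zeroW k : coord zeroW k = 0.
Proof. exact/ap_zeroW/laurent_xvar. Qed.

Lemma linW_subrr D : linW (-1) D D = zeroW.
Proof. by apply: W_coord_eq => k; rewrite coord_linW coord_zeroW scN1 mulN1r addNr. Qed.

Lemma coord_pW i k : coord (pW i) k = (i == k)%:R.
Proof. exact: pW_xvar. Qed.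


(** * Monomials with integer exponents *)

Definition zpos (z : int) : nat := if z is Posz k then k else 0.
Definition zneg (z : int) : nat := if z is Negz k then k.+1 else 0.

Lemma zpos_sub_zneg z : z = (zpos z)%:Z - (zneg z)%:Z.
Proof. by case: z => k /=; rewrite ?subr0 // NegzE sub0r. Qed.

Definition xpow (a : 'I_n -> int) : F :=
  xmon [multinom zpos (a i) | i < n] / xmon [multinom zneg (a i) | i < n].

Definition incr (a : 'I_n -> int) i : 'I_n -> int := fun l => a l + (i == l)%:R.
Definition decr (a : 'I_n -> int) i : 'I_n -> int := fun l => a l - (i == l)%:R.

Lemma incrK a i : incr (decr a i) i = a.
Proof. by apply: functional_extensionality => l; rewrite /incr /decr subrK. Qed.

Lemma decrK a i : decr (incr a i) i = a.
Proof. by apply: functional_extensionality => l; rewrite /incr /decr addrK. Qed.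

Lemma laurent_xpow a : laurent (xpow a).
Proof. exact/laurent_div_xmon/laurent_xmon. Qed.

Lemma xpow_frac a (e m : 'X_{1..n}) :
  (forall i, a i = (e i)%:Z - (m i)%:Z) -> xpow a = xmon e / xmon m.
Proof.
move=> h; apply/eqP; rewrite eqr_div ?xmon_neq0 // -!xmonD; apply/eqP; congr xmon.
by apply/mnmP => i; rewrite !mnmDE !mnmE; move: (h i) (zpos_sub_zneg (a i)); lia.
Qed.

Lemma xpow0 : xpow (fun _ => 0) = 1.
Proof. by rewrite (@xpow_frac _ 0%MM 0%MM) ?xmon0 ?divr1 // => i; rewrite mnm0E. Qed.

Lemma xpow_incr a i : xpow (incr a i) = xvar i * xpow a.
Proof.
set mp := [multinom zpos (a l) | l < n]; set mn := [multinom zneg (a l) | l < n].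
rewrite (@xpow_frac _ (mp + U_(i))%MM mn).
  by rewrite xmonD /xpow -/mp -/mn -/(xvar i) mulrAC mulrC.
move=> l; rewrite /incr mnmDE mnm1E !mnmE; have := zpos_sub_zneg (a l).
by case: (i == l); rewrite /= ?addn0 ?addr0 //; lia.
Qed.

Lemma xvar_pW_xpow i a : xvar i * ap (pW i) (xpow a) = (a i)%:~R * xpow a.
Proof.
rewrite /xpow xvar_pW_frac /euler_frac eulerX -mulrBl rmorphM rmorphB !rmorph_nat.
rewrite -mulrA !mnmE; congr (_ * _).
by rewrite [in RHS](zpos_sub_zneg (a i)) rmorphB.
Qed.

Lemma pW_xpow i a : ap (pW i) (xpow a) = (a i)%:~R * xpow (decr a i).
Proof.
apply: (mulfI (xvar_neq0 i)); rewrite xvar_pW_xpow.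
by rewrite [RHS]mulrCA -xpow_incr incrK.
Qed.

Lemma sum_absz_update (a b : 'I_n -> int) i : (forall l, l != i -> a l = b l) ->
  (\sum_l absz (a l) + absz (b i) = \sum_l absz (b l) + absz (a i))%N.
Proof.
move=> h; rewrite [X in (X + _)%N = _](bigD1 i) //= [X in _ = (X + _)%N](bigD1 i) //=.
by rewrite (eq_bigr (fun l => absz (b l))) => [|l /h ->]; first lia.
Qed.

Lemma xpow_ind (h : ('I_n -> int) -> F) : h (fun _ => 0) = 1 ->
  (forall a i, h (incr a i) = xvar i * h a) -> forall a, h a = xpow a.
Proof.
move=> h0 hS a; move: {-1}(\sum_l absz (a l))%N (leqnn (\sum_l absz (a l))) => N.
elim: N a => [|N ih] a hN.
  have -> : a = (fun _ => 0).
    apply: functional_extensionality => l; apply/eqP; rewrite -absz_eq0 -leqn0.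
    by apply: leq_trans hN; rewrite (bigD1 l) //=; exact: leq_addr.
  by rewrite h0 xpow0.
case: (pickP (fun l => a l != 0)) => [i hi|none]; last first.
  have -> : a = (fun _ => 0).
    by apply: functional_extensionality => l; move: (none l) => /negbFE /eqP.
  by rewrite h0 xpow0.
case: (Order.TotalTheory.ltgtP (a i) 0) => hai; last by rewrite hai eqxx in hi.
- have hb : (\sum_l absz (incr a i l) <= N)%N.
    have : (\sum_l absz (a l) + absz (incr a i i) = \sum_l absz (incr a i l) + absz (a i))%N.
      by apply: sum_absz_update => l /negPf; rewrite /incr eq_sym => ->; rewrite addr0.
    by move: hN hai; rewrite /incr eqxx /=; lia.
  by apply: (mulfI (xvar_neq0 i)); rewrite -hS -xpow_incr ih.
- have hb : (\sum_l absz (decr a i l) <= N)%N.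
    have : (\sum_l absz (a l) + absz (decr a i i) = \sum_l absz (decr a i l) + absz (a i))%N.
      by apply: sum_absz_update => l /negPf; rewrite /decr eq_sym => ->; rewrite subr0.
    by move: hN hai; rewrite /decr eqxx /=; lia.
  by rewrite -(incrK a i) hS xpow_incr ih.
Qed.


Lemma mcoeffMXvar (q : P) i (e : 'X_{1..n}) :
  (q * 'X_i)@_e = if (0 < e i)%N then q@_(e - U_(i)%MM) else 0.
Proof.
case: ifP => he.
  have {1}-> : e = (U_(i) + (e - U_(i)))%MM.
    rewrite addmC submK //; apply/mnm_lepP => l; rewrite mnm1E.
    by case: eqP => [<-|].
  by rewrite mcoeffMX.
elim/mpolyind: q => [|c m q _ _ ih]; first by rewrite mul0r mcoeff0.
rewrite mulrDl -scalerAl -mpolyXD mcoeffD mcoeffZ mcoeffX ih.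
suff /negPf -> : (m + U_(i))%MM != e by rewrite mulr0 addr0.
by apply/eqP => h; move: he; rewrite -h mnmDE mnm1E eqxx addn1.
Qed.

Section CharZero.
Hypothesis charK0 : [pchar K] =i pred0.

Lemma intK_eq0 (z : int) : (z%:~R : K) = 0 -> z = 0.
Proof.
have hc := (pcharf0P K).1 charK0.
case: z => k /=; first by move=> /eqP; rewrite [_ == _]hc => /eqP ->.
by rewrite NegzE rmorphN /= => /eqP; rewrite oppr_eq0 [_ == _]hc.
Qed.

Lemma natK_inj a b : (a%:R : K) = b%:R -> a = b.
Proof.
move=> h; have : (((a%:Z - b%:Z) : int)%:~R : K) = 0.
  by rewrite rmorphB; change ((a%:R : K) - b%:R = 0); rewrite h subrr.
by move/intK_eq0; lia.
Qed.

Lemma intF_eq0 (z : int) : (z%:~R : F) = 0 -> z = 0.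
Proof.
rewrite -sc_int /sc => /eqP; rewrite tofrac_eq0 mpolyC_eq0 => /eqP; exact: intK_eq0.
Qed.

Lemma intF_mulIf (z : int) (u : F) : z != 0 -> z%:~R * u = 0 -> u = 0.
Proof.
move=> hz /eqP; rewrite mulf_eq0 => /orP [/eqP/intF_eq0 h|/eqP //].
by rewrite h eqxx in hz.
Qed.

Lemma mcoeff_euler_shift i (p : P) (k : nat) e :
  (euler i p - k%:R * p)@_e = ((e i)%:R - k%:R) * p@_e.
Proof. by rewrite mcoeffB mcoeff_euler -mpolyC_nat mcoeffCM mulrBl. Qed.

Lemma euler_shift_eq0_supp i (p : P) (k : nat) e : e \in msupp p ->
  (euler i p - k%:R * p)@_e = 0 -> e i = k.
Proof.
rewrite mcoeff_msupp mcoeff_euler_shift => hp /eqP.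
by rewrite mulf_eq0 (negPf hp) orbF subr_eq0 => /eqP /natK_inj.
Qed.

Lemma pW_kernel u : laurent u -> (forall l, ap (pW l) u = 0) -> exists c, u = sc c.
Proof.
case=> p [m ->] h.
have supp_m e l : e \in msupp p -> e l = m l.
  move=> he; apply: (euler_shift_eq0_supp he).
  have := h l; move/(congr1 (fun x => xvar l * x)); rewrite xvar_pW_frac mulr0 => /eqP.
  rewrite mulf_eq0 invr_eq0 (negPf (xmon_neq0 m)) orbF tofrac_eq0 => /eqP ->.
  by rewrite mcoeff0.
exists (\sum_(e <- msupp p) p@_e).
rewrite {1}(mpolyE p).
have -> : \sum_(e <- msupp p) p@_e *: 'X_[e] = (\sum_(e <- msupp p) p@_e) *: ('X_[m] : P).
  rewrite scaler_suml; apply: eq_big_seq => e he; congr (_ *: 'X_[_]).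
  by apply/mnmP => l; exact: supp_m.
by rewrite -mul_mpolyC rmorphM -/(xmon m) mulfK ?xmon_neq0.
Qed.

(* Compare the coefficients of extreme [x_i]-degree: the top one forces
   [max_i p + j + 1 = k], the bottom one (as [c != 0]) forces [min_i p = k]. *)
Lemma poly_shift_euler_eq0 i (p q : P) (k j : nat) c : c != 0 ->
  q = euler i p - k%:R * p ->
  q * 'X_i + c%:MP * q = - (j.+1)%:R * (p * 'X_i) -> p = 0.
Proof.
move=> hc0 -> {q}; set q := euler i p - k%:R * p => hP; case: (eqVneq p 0) => [//|pn0]; exfalso.
have hq e : q@_e = ((e i)%:R - k%:R) * p@_e by apply: mcoeff_euler_shift.
have q0 e : e \notin msupp p -> q@_e = 0 by move=> he; rewrite hq (memN_msupp_eq0 he) mulr0.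
have p0 e : e \notin msupp p -> p@_e = 0 by move/memN_msupp_eq0.
have sn0 : msupp p != [::] by rewrite msupp_eq0.
have [emax hmax hmaxP] := seq_argmax (fun e : 'X_{1..n} => e i) sn0.
have [emin hmin hminP] := seq_argmin (fun e : 'X_{1..n} => e i) sn0.
have top : (emax i + j.+1)%N = k.
  have := congr1 (mcoeff (U_(i) + emax)%MM) hP.
  rewrite mcoeffD mcoeffMX mcoeffCM mulNr mcoeffN -mpolyC_nat mcoeffCM mcoeffMX !hq.
  have -> : p@_(U_(i) + emax)%MM = 0.
    apply: memN_msupp_eq0; apply/negP => /hmaxP.
    by rewrite mnmDE mnm1E eqxx add1n ltnn.
  rewrite !mulr0 addr0 => /eqP; rewrite -mulNr -subr_eq0 -mulrBl mulf_eq0.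
  move: hmax; rewrite mcoeff_msupp => /negPf ->; rewrite orbF opprK addrAC subr_eq0 -natrD.
  by move=> /eqP /natK_inj.
have bottom : emin i = k.
  have below (r : P) : (0 < emin i)%N -> (forall e, e \notin msupp p -> r@_e = 0) ->
      r@_(emin - U_(i))%MM = 0.
    move=> hpos hr; apply: hr; apply/negP => /hminP; rewrite mnmBE mnm1E eqxx /=.
    by move: hpos; lia.
  have := congr1 (mcoeff emin) hP.
  rewrite mcoeffD mcoeffCM mulNr mcoeffN -mpolyC_nat mcoeffCM !mcoeffMXvar.
  case: ifP => hpos; rewrite ?(below q hpos q0) ?(below p hpos p0) ?mulr0 ?add0r ?oppr0;
    move=> /eqP; rewrite mulf_eq0 (negPf hc0) /= hq mulf_eq0;
    move: hmin; rewrite mcoeff_msupp => /negPf ->; rewrite orbF subr_eq0 => /eqP;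
    exact: natK_inj.
by have := hmaxP emin hmin; rewrite bottom -top; lia.
Qed.

Lemma shift_euler_eq0 i c (j : nat) u : c != 0 -> laurent u ->
  (xvar i + sc c) * ap (pW i) u = - (j.+1)%:R * u -> u = 0.
Proof.
move=> hc0 [p [m ->]] h.
have := clear_euler_frac_id (xvar_neq0 i) (xmon_neq0 m) (xvar_pW_frac i p m) h.
rewrite /euler_frac; set q := euler i p - (m i)%:R * p => hq.
have qE : q = euler i p - (m i)%:R * p by [].
clearbody q; suff -> : p = 0 by rewrite tofrac0 mul0r.
apply: (poly_shift_euler_eq0 hc0 qE); apply/eqP.
rewrite -tofrac_eq !(rmorphD, rmorphM, rmorphN, rmorph_nat); apply/eqP.
by apply: etrans hq; rewrite mulrDl; congr (_ + _); apply: mulrC.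
Qed.

End CharZero.


Definition eW i : WW := mulW (mkL (laurent_xvar i)) (pW i).
Definition sqW i : WW := mulW (mkL (laurentM (laurent_xvar i) (laurent_xvar i))) (pW i).
Definition invW i : WW := mulW (mkL (laurent_div_xmon U_(i)%MM laurent1)) (pW i).
Definition monW a j : WW := mulW (mkL (laurent_xpow a)) (pW j).

Lemma coord_eW i k : coord (eW i) k = xvar i * (i == k)%:R.
Proof. by rewrite coord_mulW coord_pW. Qed.

Lemma coord_sqW i k : coord (sqW i) k = xvar i * xvar i * (i == k)%:R.
Proof. by rewrite coord_mulW coord_pW. Qed.

Lemma coord_invW i k : coord (invW i) k = 1 / xvar i * (i == k)%:R.
Proof. by rewrite coord_mulW coord_pW. Qed.

Lemma coord_monW a j k : coord (monW a j) k = xpow a * (j == k)%:R.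
Proof. by rewrite coord_mulW coord_pW. Qed.

Lemma ap_eW i u : laurent u -> ap (eW i) u = xvar i * ap (pW i) u.
Proof. exact: ap_mulW. Qed.

Lemma ap_sqW i u : laurent u -> ap (sqW i) u = xvar i * xvar i * ap (pW i) u.
Proof. exact: ap_mulW. Qed.

Lemma ap_invW i u : laurent u -> ap (invW i) u = 1 / xvar i * ap (pW i) u.
Proof. exact: ap_mulW. Qed.

Lemma ap_monW a j u : laurent u -> ap (monW a j) u = xpow a * ap (pW j) u.
Proof. exact: ap_mulW. Qed.

Lemma der_xvar_sq (D : WW) i : ap D (xvar i * xvar i) = 2%:R * xvar i * ap D (xvar i).
Proof. by rewrite (derM (svalP D) (laurent_xvar i) (laurent_xvar i)); ring. Qed.

Lemma der_xvar_delta (D : WW) i (b : bool) : ap D (xvar i * b%:R) = ap D (xvar i) * b%:R.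
Proof. exact/(derMr_nat (svalP D))/laurent_xvar. Qed.

Lemma der_xvar_sq_delta (D : WW) i (b : bool) :
  ap D (xvar i * xvar i * b%:R) = 2%:R * xvar i * ap D (xvar i) * b%:R.
Proof. by rewrite (derMr_nat (svalP D)) ?der_xvar_sq //; apply/laurentM/laurent_xvar/laurent_xvar. Qed.

Lemma der_xpow_delta (D : WW) a (b : bool) : ap D (xpow a * b%:R) = ap D (xpow a) * b%:R.
Proof. exact/(derMr_nat (svalP D))/laurent_xpow. Qed.

Lemma xvar_pW_inv i : xvar i * ap (pW i) (1 / xvar i) = - (1 / xvar i).
Proof.
have hl : laurent (1 / xvar i) by apply/laurent_div_xmon/laurent1.
have := derM (svalP (pW i)) (laurent_xvar i) hl.
rewrite mul1r divff ?xvar_neq0 // (der1 (svalP _)) pW_xvar eqxx mul1r => /eqP.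
by rewrite eq_sym addr_eq0 => /eqP.
Qed.

Ltac coords := apply: W_coord_eq => k; rewrite ?coord_brW ?coord_linW ?coord_zeroW
  ?coord_eW ?coord_sqW ?coord_invW ?coord_monW ?coord_pW.

Lemma br_pW_eW i : brW (pW i) (eW i) = pW i.
Proof. by coords; rewrite der_xvar_delta (der_nat (svalP _)) pW_xvar eqxx /=; ring. Qed.

Lemma br_pW_eW_ne l i : l != i -> brW (pW l) (eW i) = zeroW.
Proof. by move=> li; coords; rewrite der_xvar_delta (der_nat (svalP _)) pW_xvar (negPf li) /=; ring. Qed.

Lemma br_eW_eW_ne i l : i != l -> brW (eW i) (eW l) = zeroW.
Proof.
move=> il; coords; rewrite !der_xvar_delta !(ap_eW _ (laurent_xvar _)) !pW_xvar.
by rewrite (negPf il) [l == i]eq_sym (negPf il) /=; ring.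
Qed.

Lemma br_eW_invW i : brW (eW i) (invW i) = linW (- 2%:R) (invW i) zeroW.
Proof.
have hl : laurent (1 / xvar i) by apply/laurent_div_xmon/laurent1.
coords; rewrite (derMr_nat (svalP _) _ hl) der_xvar_delta (ap_eW _ hl) (ap_invW _ (laurent_xvar _)).
rewrite pW_xvar xvar_pW_inv eqxx scN sc_nat /=.
by ring.
Qed.

Lemma br_pW_sqW i : brW (pW i) (sqW i) = linW 2%:R (eW i) zeroW.
Proof. by coords; rewrite der_xvar_sq_delta (der_nat (svalP _)) pW_xvar eqxx sc_nat /=; ring. Qed.

Lemma br_pW_sqW_ne l i : l != i -> brW (pW l) (sqW i) = zeroW.
Proof. by move=> li; coords; rewrite der_xvar_sq_delta (der_nat (svalP _)) pW_xvar (negPf li) /=; ring. Qed.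

Lemma br_eW_sqW i : brW (eW i) (sqW i) = sqW i.
Proof.
coords; rewrite der_xvar_sq_delta der_xvar_delta (ap_eW _ (laurent_xvar _)) (ap_sqW _ (laurent_xvar _)).
by rewrite pW_xvar eqxx /=; ring.
Qed.

Lemma br_eW_monW i a j : brW (eW i) (monW a j) = linW ((a i - (i == j)%:Z)%:~R) (monW a j) zeroW.
Proof.
coords; rewrite der_xpow_delta der_xvar_delta (ap_eW _ (laurent_xpow a)).
rewrite (ap_monW _ _ (laurent_xvar _)) xvar_pW_xpow pW_xvar sc_int rmorphB /=.
case: (eqVneq i j) => [<-|ij]; rewrite ?eqxx //=; first by ring.
by rewrite ?(negPf ij) ?[j == i]eq_sym ?(negPf ij) /=; ring.
Qed.

Lemma br_pW_monW i a j : brW (pW i) (monW a j) = linW (a i)%:~R (monW (decr a i) j) zeroW.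
Proof. by coords; rewrite der_xpow_delta (der_nat (svalP _)) pW_xpow sc_int; ring. Qed.

Lemma ap_sqW_xpow i a : ap (sqW i) (xpow a) = xvar i * ((a i)%:~R * xpow a).
Proof. by rewrite (ap_sqW _ (laurent_xpow a)) -mulrA xvar_pW_xpow. Qed.

Lemma br_sqW_monW i a j :
  brW (sqW i) (monW a j) = linW ((a i - 2 * (i == j)%:Z)%:~R) (monW (incr a i) j) zeroW.
Proof.
coords; rewrite der_xpow_delta der_xvar_sq_delta ap_sqW_xpow.
rewrite (ap_monW _ _ (laurent_xvar _)) pW_xvar.
rewrite sc_int rmorphB rmorphM xpow_incr /=.
case: (eqVneq i j) => [<-|ij]; rewrite ?eqxx //=; first by ring.
by rewrite ?(negPf ij) ?[j == i]eq_sym ?(negPf ij) /=; ring.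
Qed.


(** * Automorphisms fixing the partial derivatives *)

Section AutomorphismFixingPartials.
Hypothesis charK0 : [pchar K] =i pred0.
Variable s : WW -> WW.
Hypothesis s_aut : lie_aut s.
Hypothesis s_partial : forall (i : 'I_n) (D : WW), is_partial i D -> s D = D.

Lemma s_pW i : s (pW i) = pW i.
Proof. exact/s_partial/pW_partial. Qed.

Lemma s_linW a D E : s (linW a D E) = linW a (s D) (s E).
Proof. by apply: W_eq => f; apply: s_aut.2.1 (linW_lin_comb a D E) f. Qed.

Lemma s_brW D E : s (brW D E) = brW (s D) (s E).
Proof.
apply: W_eq => f; rewrite (s_aut.2.2 D E (brW D E) (brW_bracket D E) f).
by rewrite /= !derFE.
Qed.

Lemma s_zeroW : s zeroW = zeroW.
Proof. by rewrite -{1}(linW_subrr zeroW) s_linW linW_subrr. Qed.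

Lemma s_brW_fixed X D : s X = X -> s (brW X D) = brW X (s D).
Proof. by move=> h; rewrite s_brW h. Qed.

Lemma s_brW_lin X a D E : s X = X -> brW X D = linW a E zeroW ->
  brW X (s D) = linW a (s E) zeroW.
Proof. by move=> hX h; rewrite -(s_brW_fixed _ hX) h s_linW s_zeroW. Qed.

Lemma coord_eq_up_to_sc D E : (forall l, brW (pW l) D = brW (pW l) E) ->
  forall k, exists c, coord D k = coord E k + sc c.
Proof.
move=> h k; have hl := laurentB (laurent_coord D k) (laurent_coord E k).
have [c hc] : exists c, coord D k - coord E k = sc c.
  apply: (pW_kernel charK0) => // l.
  have : coord (brW (pW l) D) k = coord (brW (pW l) E) k by rewrite h.
  rewrite !coord_brW !coord_pW !(der_nat (svalP _)) !subr0 => e.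
  by rewrite (derB (svalP _) (laurent_coord _ _) (laurent_coord _ _)) e subrr.
by exists c; rewrite -hc addrC subrK.
Qed.

Lemma s_eW_coord i k : exists c, coord (s (eW i)) k = xvar i * (i == k)%:R + sc c.
Proof.
rewrite -coord_eW; apply: coord_eq_up_to_sc => l; rewrite -(s_brW_fixed _ (s_pW l)).
case: (eqVneq l i) => [->|li]; first by rewrite br_pW_eW s_pW.
by rewrite (br_pW_eW_ne li) s_zeroW.
Qed.

Lemma s_eW_coord_ne i k : i != k -> coord (s (eW i)) k = 0.
Proof.
move=> ik; have : brW (s (eW i)) (s (eW k)) = zeroW by rewrite -s_brW (br_eW_eW_ne ik) s_zeroW.
move/(congr1 (fun X => coord X k)); rewrite /= coord_brW coord_zeroW.
have [c1 ->] := s_eW_coord k k; have [c2 h2] := s_eW_coord i k.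
rewrite eqxx mulr1 (derD (svalP _) (laurent_xvar _) (laurent_sc _)) (der_sc (svalP _)) addr0.
by rewrite -/(coord _ k) h2 (negPf ik) mulr0 add0r (der_sc (svalP _)) subr0.
Qed.

Lemma s_eW_shape i :
  exists c, s (eW i) = mulW (mkL (laurentD (laurent_xvar i) (laurent_sc c))) (pW i).
Proof.
have [c hc] := s_eW_coord i i; exists c.
apply: W_coord_eq => k; rewrite coord_mulW coord_pW /=.
case: (eqVneq i k) => [<-|ik]; first by rewrite hc eqxx /= !mulr1.
by rewrite s_eW_coord_ne // mulr0.
Qed.

(* If [sigma(E_i) = (x_i + c) d_i] with [c != 0], then [[E_i, G_i] = -2 G_i]
   makes every coordinate of [sigma(G_i)] a Laurent solution of
   [(x_i + c) d_i u = -k u] with [k = 1, 2]: so [sigma(G_i) = 0]. *)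
Lemma s_eW i : s (eW i) = eW i.
Proof.
have [c hc] := s_eW_shape i.
case: (eqVneq c 0) => [c0|cn0].
  rewrite hc c0; apply: W_coord_eq => k.
  by rewrite !coord_mulW /= /sc mpolyC0 tofrac0 addr0.
exfalso; set G := s (invW i).
have hG : brW (s (eW i)) G = linW (- 2%:R) G zeroW by rewrite -s_brW br_eW_invW s_linW s_zeroW.
have G0 k : coord G k = 0.
  have := congr1 (fun D => coord D k) hG; rewrite /= coord_brW coord_linW coord_zeroW hc.
  rewrite (ap_mulW _ _ (laurent_coord _ _)) coord_mulW coord_pW !mkLE scN sc_nat addr0.
  case: (eqVneq i k) => [<-|ik].
    rewrite mulr1 (derD (svalP _) (laurent_xvar _) (laurent_sc _)) (der_sc (svalP _)) addr0.
    rewrite -/(coord G i) => e.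
    apply: (shift_euler_eq0 charK0 (i := i) (j := 0) cn0 (laurent_coord _ _)).
    by rewrite -[X in X = _](subrK (coord G i)) e; ring.
  by rewrite mulr0 (der0 (svalP _)) subr0; apply: (shift_euler_eq0 charK0 (i := i) (j := 1) cn0 (laurent_coord _ _)).
have : G = zeroW by apply: W_coord_eq => k; rewrite G0 coord_zeroW.
rewrite /G -s_zeroW => /(bij_inj s_aut.1) /(congr1 (fun D => coord D i)).
rewrite /= coord_invW coord_zeroW eqxx mulr1 => /eqP.
by rewrite div1r invr_eq0 (negPf (xvar_neq0 i)).
Qed.

(* With [sigma(F_i) = F_i + sum_k c_k d_k], the k-th coordinate of
   [[E_i, sigma(F_i)] = sigma(F_i)] reads [c_k = - c_i delta_ik]. *)
Lemma s_sqW i : s (sqW i) = sqW i.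
Proof.
have hd : forall k, exists d, coord (s (sqW i)) k = coord (sqW i) k + sc d.
  apply: coord_eq_up_to_sc => l; rewrite -(s_brW_fixed _ (s_pW l)).
  case: (eqVneq l i) => [->|li]; first by rewrite br_pW_sqW s_linW s_eW s_zeroW.
  by rewrite (br_pW_sqW_ne li) s_zeroW.
have hE : brW (eW i) (s (sqW i)) = s (sqW i) by rewrite -(s_brW_fixed _ (s_eW i)) br_eW_sqW.
have [di hi] := hd i.
have dk k d : coord (s (sqW i)) k = coord (sqW i) k + sc d -> sc d = - (sc di * (i == k)%:R).
  move=> hk; have := congr1 (fun D => coord D k) hE; rewrite /= coord_brW hk coord_sqW.
  rewrite (derD (svalP _) _ (laurent_sc _)); last by apply/laurentM/laurent_nat/laurentM/laurent_xvar/laurent_xvar.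
  rewrite (der_sc (svalP _)) addr0 der_xvar_sq_delta coord_eW der_xvar_delta.
  rewrite -[ap (s _) _]/(coord _ i) -[ap (eW i) _]/(coord _ i) hi coord_eW coord_sqW eqxx /= => e.
  by apply: (addrI (xvar i * xvar i * (i == k)%:R)); rewrite -e; ring.
have di0 : sc di = 0.
  have := dk i di hi; rewrite eqxx mulr1 => h.
  apply: (@intF_mulIf charK0 2) => //.
  by rewrite -[(2%:Z)%:~R]/(2%:R : F) mulr_natl mulr2n {1}h addNr.
apply: W_coord_eq => k; have [d hk] := hd k.
by rewrite hk (dk k d hk) di0 mul0r oppr0 addr0.
Qed.


Lemma monW0 j : monW (fun _ => 0) j = pW j.
Proof. by apply: W_coord_eq => k; rewrite coord_monW xpow0 mul1r coord_pW. Qed.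

Section MonomialFields.
Variable j : 'I_n.
Local Notation g a k := (coord (s (monW a j)) k).

Lemma coord_s_eW_monW i a k :
  xvar i * ap (pW i) (g a k) - g a i * (i == k)%:R = (a i - (i == j)%:Z)%:~R * g a k.
Proof.
have := s_brW_lin (s_eW i) (br_eW_monW i a j).
move/(congr1 (fun D => coord D k)); rewrite /= coord_brW coord_linW coord_zeroW addr0 sc_int.
by rewrite (ap_eW _ (laurent_coord _ _)) coord_eW der_xvar_delta.
Qed.

Lemma coord_s_pW_monW i a k : ap (pW i) (g a k) = (a i)%:~R * g (decr a i) k.
Proof.
have := s_brW_lin (s_pW i) (br_pW_monW i a j).
move/(congr1 (fun D => coord D k)); rewrite /= coord_brW coord_linW coord_zeroW addr0 sc_int.
by rewrite coord_pW (der_nat (svalP _)) subr0.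
Qed.

Lemma coord_s_sqW_monW i a k :
  xvar i * xvar i * ap (pW i) (g a k) - 2%:R * xvar i * g a i * (i == k)%:R
  = (a i - 2 * (i == j)%:Z)%:~R * g (incr a i) k.
Proof.
have := s_brW_lin (s_sqW i) (br_sqW_monW i a j).
move/(congr1 (fun D => coord D k)); rewrite /= coord_brW coord_linW coord_zeroW addr0 sc_int.
by rewrite (ap_sqW _ (laurent_coord _ _)) coord_sqW der_xvar_sq_delta.
Qed.

(* Eliminating [d_j g] and [d_j^2 g] between the three relations above at
   [a] and [a - e_j] leaves [2 g = 0]. *)
Lemma coord_s_monW_ne a k : k != j -> g a k = 0.
Proof.
move=> kj; set u := g a k; set u' := g (decr a j) k.
set du := ap (pW j) u; set ddu := ap (pW j) du; set du' := ap (pW j) u'.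
set al : F := (a j)%:~R.
have E1 : xvar j * du = (al - 1) * u.
  have := coord_s_eW_monW j a k; rewrite eqxx [j == k]eq_sym (negPf kj) mulr0 subr0 => ->.
  by rewrite rmorphB /= rmorph1.
have P1 : du = al * u' by apply: coord_s_pW_monW.
have F1 : xvar j * xvar j * du' = (al - 1 - 2%:R) * u.
  have := coord_s_sqW_monW j (decr a j) k.
  rewrite [j == k]eq_sym (negPf kj) mulr0 subr0 incrK => ->.
  by rewrite eqxx /decr eqxx !rmorphB rmorphM /= mulr1.
have D1 : ap (pW j) (xvar j * du) = xvar j * ddu + du.
  by rewrite (derM (svalP _) (laurent_xvar _) (laurent_derF _ _)) pW_xvar eqxx mul1r.
have D2 : ap (pW j) (xvar j * du) = (al - 1) * du.
  rewrite E1; have -> : al - 1 = ((a j - 1)%:~R : F) by rewrite rmorphB.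
  by rewrite (derZint (svalP _) _ (laurent_coord _ _)).
have P2 : ddu = al * du' by rewrite /ddu P1 (derZint (svalP _) _ (laurent_coord _ _)).
apply: (@intF_mulIf charK0 2) => //.
transitivity (xvar j * ((al - 1) * du - (xvar j * ddu + du))
  + xvar j * xvar j * (ddu - al * du') - (al - 2%:R) * (xvar j * du - (al - 1) * u)
  + al * (xvar j * xvar j * du' - (al - 1 - 2%:R) * u)).
  by rewrite -[(2%:Z)%:~R]/(2%:R : F); ring.
by rewrite -D2 D1 P2 E1 F1 !subrr !mulr0 subr0 !addr0.
Qed.

Lemma coord_s_monW_delta a i : g a i * (i == j)%:R = g a j * (i == j)%:R.
Proof. by case: (eqVneq i j) => [->|ij] /=; rewrite ?mulr0. Qed.

Lemma xvar_pW_coord_s_monW i a : xvar i * ap (pW i) (g a j) = (a i)%:~R * g a j.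
Proof.
have := coord_s_eW_monW i a j; rewrite coord_s_monW_delta => e.
apply/eqP; rewrite -subr_eq0 -[X in _ == X](subrr ((a i - (i == j)%:Z)%:~R * g a j)) -[X in _ == X - _]e.
by rewrite rmorphB /= -[((i == j)%:Z)%:~R]/((i == j)%:R : F); apply/eqP; ring.
Qed.

Lemma xvar_sq_pW_coord_s_monW i a :
  xvar i * xvar i * ap (pW i) (g a j) - 2%:R * xvar i * g a j * (i == j)%:R
  = (a i - 2 * (i == j)%:Z)%:~R * g (incr a i) j.
Proof. by rewrite -coord_s_sqW_monW -!mulrA coord_s_monW_delta. Qed.

(* The [j]-th coordinate of [sigma(M_a^j)] obeys the recursion defining [xpow]. *)
Lemma coord_s_monW_incr a i : g (incr a i) j = xvar i * g a j.
Proof.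
case: (eqVneq (a i + 1) 0) => [ai1|ai1].
  have := xvar_sq_pW_coord_s_monW i a; rewrite -mulrA xvar_pW_coord_s_monW.
  have -> : a i = -1 by apply/eqP; rewrite -subr_eq0 opprK; apply/eqP.
  set z : int := -1 - 2 * (i == j)%:Z => e.
  have z0 : z != 0 by rewrite /z; case: (i == j).
  apply/eqP; rewrite -subr_eq0; apply/eqP; apply: (intF_mulIf charK0 z0).
  rewrite mulrBr -e /z !rmorphB rmorphM /=.
  by rewrite -[((i == j)%:Z)%:~R]/((i == j)%:R : F) -[(2%:Z)%:~R]/(2%:R : F); ring.
have := xvar_pW_coord_s_monW i (incr a i); rewrite coord_s_pW_monW decrK /incr eqxx => e.
apply/eqP; rewrite -subr_eq0; apply/eqP; apply: (intF_mulIf charK0 ai1).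
by rewrite mulrBr -e mulrCA subrr.
Qed.

Lemma s_monW a : s (monW a j) = monW a j.
Proof.
have g0 : g (fun _ => 0) j = 1 by rewrite monW0 s_pW coord_pW eqxx.
have gE := xpow_ind g0 coord_s_monW_incr.
apply: W_coord_eq => k; rewrite coord_monW.
case: (eqVneq k j) => [->|kj] /=; first by rewrite mulr1 gE.
by rewrite coord_s_monW_ne // mulr0.
Qed.

End MonomialFields.

Lemma s_mulW_pW k (h : L) : s (mulW h (pW k)) = mulW h (pW k).
Proof.
case: (svalP h) => p [m hm].
have -> : h = mkL (laurent_div_xmon m (laurent_tofrac p)) by apply: L_eq.
elim/mpolyind: p {hm} => [|c e p _ _ ih].
  suff -> : mulW (mkL (laurent_div_xmon m (laurent_tofrac 0))) (pW k) = zeroW by apply: s_zeroW.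
  by apply: W_eqF => u hu; rewrite ap_mulW // ap_zeroW // mkLE tofrac0 !mul0r.
set a := fun l => (e l)%:Z - (m l)%:Z.
suff -> : mulW (mkL (laurent_div_xmon m (laurent_tofrac (c *: 'X_[e] + p)))) (pW k)
  = linW c (monW a k) (mulW (mkL (laurent_div_xmon m (laurent_tofrac p))) (pW k)).
  by rewrite s_linW s_monW ih.
apply: W_eqF => u hu; rewrite ap_mulW // ap_linW // ap_monW // ap_mulW // !mkLE.
rewrite (@xpow_frac _ e m) // -mul_mpolyC rmorphD rmorphM /sc -/(xmon e).
ring.
Qed.

(* Induction on [r], peeling off the field [D(x_r) d_r]. *)
Lemma s_fixed_coord_supp r D : (forall k : 'I_n, (r <= k)%N -> coord D k = 0) -> s D = D.
Proof.
elim: r D => [|r ih] D hD.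
  suff -> : D = zeroW by apply: s_zeroW.
  by apply: W_coord_eq => k; rewrite hD // coord_zeroW.
case: (ltnP r n) => hr; last by apply: ih => k hk; have := ltn_ord k; lia.
set k0 := Ordinal hr; set h := mkL (laurent_coord D k0).
set D' := linW (-1) (mulW h (pW k0)) D.
have hD' : s D' = D'.
  apply: ih => k hk; rewrite coord_linW coord_mulW coord_pW mkLE scN1.
  case: (eqVneq k0 k) => [<-|ne] /=; first by rewrite mulr1 mulN1r addNr.
  rewrite mulr0 mulr0 add0r; apply: hD.
  suff : nat_of_ord k <> r by move: hk; lia.
  by move=> e; move/eqP: ne; apply; apply: val_inj.
have -> : D = linW 1 (mulW h (pW k0)) D'.
  apply: W_coord_eq => k; rewrite !coord_linW coord_mulW coord_pW mkLE sc1 scN1.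
  by rewrite -/(coord D k0); ring.
by rewrite s_linW s_mulW_pW hD'.
Qed.

End AutomorphismFixingPartials.

End LaurentRing.

Theorem proposition2p11 (K : fieldType) (n : nat)
  (charK0 : [pchar K] =i pred0)
  (s : W K n -> W K n) (hs : lie_aut s)
  (hpartial : forall (i : 'I_n) (D : W K n), is_partial i D -> s D = D) :
  forall D : W K n, s D = D.
Proof.
move=> D; apply: (s_fixed_coord_supp charK0 hs hpartial (r := n)) => k hk.
by have := ltn_ord k; lia.
Qed.
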